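(* Let $\phi$ be a partial listing of $A$, let $\alpha'=\alpha_k\cdots\alpha_{l+1}$ be a prefix with $3\le l+1\le k$, and let $d$ be an integer with $0<d<a_2-1$. If $\alpha'd$ is non-empty, then $\alpha'(d-1)$ is non-empty, and $\alpha'(d+1)$ becomes non-empty after at most one further call to Next$(\varnothing)$.
   Context: Let $k\ge 2$ and let $a_k,\dots,a_2$ be positive integers with $a_2\le a_i$ for all $2<i\le k$. Let $A=[a_k]\times\cdots\times[a_2]$, where $[a]=\{0,\dots,a-1\}$; elements are written $\alpha=\alpha_k\alpha_{k-1}\cdots\alpha_2$. A prefix of $\alpha$ is $\alpha_k\cdots\alpha_{l+1}$ for some $2\le l+1\le k$; $\varnothing$ denotes the empty prefix; for a tuple $\beta=\alpha_k\cdots\alpha_{l+1}$ and $i$, $\beta i$ denotes $\alpha_k\cdots\alpha_{l+1}i$. An array $\phi:A\to\{0,1\}$ is initialized to $0$ everywhere. A tuple $\beta$ (a prefix or an element) is non-empty if some $\alpha\in A$ having $\beta$ as a prefix (or equal to $\beta$) has $\phi(\alpha)=1$, empty otherwise, and full if all such $\alpha$ have $\phi(\alpha)=1$. The procedure Next$(\beta)$, for $\beta=\alpha_k\cdots\alpha_{l+1}$ (with $l=k$ for $\beta=\varnothing$): let $m$ be the least $i$ such that $\beta i$ is empty; if $l=2$, set $\phi(\beta m):=1$ and stop; otherwise, if $m\ge a_2$, replace $m$ by the least $i$ such that $\beta i$ is not full; then call Next$(\beta m)$. A partial listing of $A$ is an array $\phi$ obtained from the all-zero array by finitely many calls of Next$(\varnothing)$.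 *)

From mathcomp Require Import all_boot.
Set Implicit Arguments. Unset Strict Implicit. Unset Printing Implicit Defensive.

(* The dimension list [a : seq nat] is [a_k; a_(k-1); ...; a_2] (so k = size a + 1,
   and a_2 = last 0 a).  A tuple alpha_k ... alpha_(l+1) is the sequence
   [alpha_k; ...; alpha_(l+1)]; beta i is [rcons beta i].  The array phi is a
   function [seq nat -> bool]; only its values on elements of A matter. *)

Definition inA (a : seq nat) (alpha : seq nat) : bool :=
  all2 (fun x n => x < n) alpha a.

Definition is_prefixA (a : seq nat) (beta : seq nat) : Prop :=
  exists alpha, inA a alpha /\ prefix beta alpha.

Definition nonempty (a : seq nat) (phi : seq nat -> bool) (beta : seq nat) : Prop :=
  exists alpha, [/\ inA a alpha, prefix beta alpha & phi alpha].

Definition empty (a : seq nat) (phi : seq nat -> bool) (beta : seq nat) : Prop :=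
  ~ nonempty a phi beta.

Definition full (a : seq nat) (phi : seq nat -> bool) (beta : seq nat) : Prop :=
  forall alpha, inA a alpha -> prefix beta alpha -> phi alpha.

Definition is_least (P : nat -> Prop) (m : nat) : Prop :=
  P m /\ forall i, i < m -> ~ P i.

Definition set1 (phi : seq nat -> bool) (alpha : seq nat) : seq nat -> bool :=
  fun x => (x == alpha) || phi x.

(* The procedure Next, as a (deterministic) big-step relation:
   [Next a beta phi phi'] means that calling Next(beta) on the array phi
   terminates with the array phi'.  beta = alpha_k..alpha_(l+1) has size k-l;
   the case l = 2 is size beta = k - 2 = (size a).-1. *)
Inductive Next (a : seq nat) : seq nat -> (seq nat -> bool) -> (seq nat -> bool) -> Prop :=
| Next_leaf beta phi m :
    size beta = (size a).-1 ->
    is_least (fun i => empty a phi (rcons beta i)) m ->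
    Next a beta phi (set1 phi (rcons beta m))
| Next_inner beta phi m m' phi' :
    size beta < (size a).-1 ->
    is_least (fun i => empty a phi (rcons beta i)) m ->
    ((m < last 0 a /\ m' = m) \/
     (last 0 a <= m /\ is_least (fun i => ~ full a phi (rcons beta i)) m')) ->
    Next a (rcons beta m') phi phi' ->
    Next a beta phi phi'.

Inductive partial_listing (a : seq nat) : (seq nat -> bool) -> Prop :=
| pl_init : partial_listing a (fun _ => false)
| pl_step phi phi' : partial_listing a phi -> Next a [::] phi phi' ->
    partial_listing a phi'.

From Pilot Require Import Defs.
From mathcomp Require Import all_boot zify.
From Stdlib Require Import Classical.

(* Two invariants of partial listings carry the argument: the non-empty children of a
   prefix form an initial segment, and once some tuple [r z ... 1] extending [r z] is
   non-empty, every sibling [r y] with [y < z] is full and every [r y] with [y < a_2] is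
   non-empty.  So if [α'd] is non-empty but [α'(d+1)] is empty, then [α'1] is non-empty
   and the next call of Next(∅) is forced along [α'] level by level; at [α'] the children
   [0..d] are non-empty while [d + 1 < a_2] is empty, so it chooses [d + 1], and since
   the prefixes it passes are not full it ends by setting an element of [A]. *)

Lemma prefix_nth {s t : seq nat} {i} : prefix s t -> i < size s -> nth 0 t i = nth 0 s i.
Proof. by rewrite prefixE => /eqP hs hi; rewrite -{1}hs nth_take. Qed.

Lemma prefix_rcons_nth {s t : seq nat} {x} : prefix (rcons s x) t -> nth 0 t (size s) = x.
Proof. by move=> hst; rewrite (prefix_nth hst) ?size_rcons // nth_rcons ltnn eqxx. Qed.

Lemma prefix_rcons_nth_lt {s t : seq nat} :
  prefix s t -> size s < size t -> prefix (rcons s (nth 0 t (size s))) t.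
Proof. by rewrite !prefixE size_rcons => /eqP hs hst; rewrite (take_nth 0 hst) hs. Qed.

Lemma prefix_take_size {s t : seq nat} : prefix s t -> take (size s) t = s.
Proof. by rewrite prefixE => /eqP. Qed.

Lemma prefix_size_eq {s t : seq nat} : prefix s t -> size t <= size s -> s = t.
Proof. by rewrite prefixE => /eqP hs hts; rewrite -hs take_oversize. Qed.

Lemma ex_least {P : nat -> Prop} {n} : P n -> exists m, is_least P m.
Proof.
elim: n {-2}n (leqnn n) => [|n IH] i hi hP.
  by exists 0; move: hi hP; rewrite leqn0 => /eqP ->.
have [[j [hj hPj]]|hnone] := classic (exists j, j <= n /\ P j); first exact: IH hPj.
exists i; split=> // j hji hPj; apply: hnone; exists j; split=> //; lia.
Qed.

Lemma inAP a s :
  inA a s <-> size s = size a /\ forall i, i < size a -> nth 0 s i < nth 0 a i.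
Proof.
rewrite /inA; elim: s a => [|x s IH] [|n a] /=; split=> //.
- by case.
- by case.
- move/andP=> [hx /IH [hs hi]]; split; first by rewrite hs.
  by case=> [|i] //= /hi.
- case=> [[hs] hi]; apply/andP; split; first exact: (hi 0).
  by apply/IH; split=> // i; apply: (hi i.+1).
Qed.

Lemma last_pos {a} : 0 < size a -> all (fun x => 0 < x) a -> 0 < last 0 a.
Proof. by move=> ha /all_nthP; rewrite -nth_last; apply; rewrite prednK. Qed.

Lemma last_le {a i} : all (fun x => last 0 a <= x) a -> i < size a -> last 0 a <= nth 0 a i.
Proof. by move/all_nthP; apply. Qed.

Lemma inA_prefix_rcons {a al} {b : seq nat} {x} :
  inA a al -> prefix (rcons b x) al -> x < nth 0 a (size b).
Proof.
move=> /inAP [hs hi] hp; rewrite -(prefix_rcons_nth hp); apply: hi.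
by rewrite -hs; have := size_prefix hp; rewrite size_rcons.
Qed.

Lemma is_prefixA_size {a} {b : seq nat} : is_prefixA a b -> size b <= size a.
Proof. by move=> [al [/inAP [<- _] /size_prefix]]. Qed.

Lemma is_prefixA_inA {a} {b : seq nat} : is_prefixA a b -> size a <= size b -> inA a b.
Proof.
move=> [al [hA hp]] hsz; rewrite (prefix_size_eq hp) //.
by have [-> _] := (inAP a al).1 hA.
Qed.

(* Padding with zeros, which are valid entries since every [a_i] is positive. *)
Lemma is_prefixA_rcons {a} {b : seq nat} {x} : all (fun x => 0 < x) a ->
  is_prefixA a b -> x < nth 0 a (size b) -> is_prefixA a (rcons b x).
Proof.
move=> hpos [al [hA hp]] hx; have [hsz hi] := (inAP a al).1 hA.
have hb : size b < size a.
  by rewrite ltnNge; apply: contraTN hx => /(nth_default 0) ->.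
exists (rcons b x ++ nseq (size a - (size b).+1) 0); split; last exact: prefix_prefix.
apply/inAP; split; first by rewrite size_cat size_nseq size_rcons subnKC.
move=> i hia; rewrite nth_cat size_rcons nth_rcons nth_nseq.
case: (ltngtP i (size b)) => hib.
- by rewrite ifT -?(prefix_nth hp hib) ?hi //; lia.
- by rewrite ifF ?ifT; [move/all_nthP: hpos; apply | lia | lia].
- by rewrite hib ltnSn.
Qed.

Lemma nonempty_is_prefixA {a phi} {b : seq nat} : nonempty a phi b -> is_prefixA a b.
Proof. by move=> [al [hA hp _]]; exists al. Qed.

Lemma not_full_witness {a phi} {b : seq nat} :
  ~ full a phi b -> exists al, [/\ inA a al, prefix b al & ~~ phi al].
Proof.
move=> hnf; apply: NNPP => hnone; apply: hnf => al hA hp.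
by apply: NNPP => hal; apply: hnone; exists al; split=> //; apply/negP.
Qed.

Lemma full_nonempty {a phi} {b : seq nat} : is_prefixA a b -> full a phi b -> nonempty a phi b.
Proof. by move=> [al [hA hp]] hf; exists al; split=> //; apply: hf. Qed.

Lemma empty_not_full {a phi} {b : seq nat} : is_prefixA a b -> empty a phi b -> ~ full a phi b.
Proof. by move=> hb hemp /(full_nonempty hb). Qed.

Lemma nonempty_prefix {a phi} {s t : seq nat} : prefix s t -> nonempty a phi t -> nonempty a phi s.
Proof. by move=> hst [al [hA hp hal]]; exists al; split=> //; apply: prefix_trans hp. Qed.

Lemma full_prefix {a phi} {s t : seq nat} : prefix s t -> full a phi s -> full a phi t.
Proof. by move=> hst hf al hA hp; apply: hf (prefix_trans hst hp). Qed.

Lemma out_of_range_empty {a phi} {b : seq nat} {x} :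
  nth 0 a (size b) <= x -> empty a phi (rcons b x).
Proof. by move=> hx [al [hA hp _]]; have := inA_prefix_rcons hA hp; rewrite ltnNge hx. Qed.

Lemma out_of_range_full {a phi} {b : seq nat} {x} :
  nth 0 a (size b) <= x -> full a phi (rcons b x).
Proof. by move=> hx al hA hp; have := inA_prefix_rcons hA hp; rewrite ltnNge hx. Qed.

Lemma empty_full_out_of_range {a phi} {b : seq nat} {x} : all (fun x => 0 < x) a ->
  is_prefixA a b -> empty a phi (rcons b x) -> full a phi (rcons b x) -> nth 0 a (size b) <= x.
Proof.
move=> hpos hb hemp hfull; rewrite leqNgt; apply/negP => hx.
exact: empty_not_full (is_prefixA_rcons hpos hb hx) hemp hfull.
Qed.

Definition least_empty a phi (b : seq nat) := is_least (fun i => empty a phi (rcons b i)).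

Definition least_not_full a phi (b : seq nat) := is_least (fun i => ~ full a phi (rcons b i)).

Definition next_choice a phi (b : seq nat) m m' :=
  (m < last 0 a /\ m' = m) \/ (last 0 a <= m /\ least_not_full a phi b m').

(* What the array before the call tells about the child [x] that Next chooses at [b]. *)
Definition chosen_child a phi (b : seq nat) x : Prop :=
  [/\ forall y, y < x -> nonempty a phi (rcons b y),
      size b < (size a).-1 ->
        (empty a phi (rcons b x) /\ x < last 0 a) \/
        [/\ forall y, y < last 0 a -> nonempty a phi (rcons b y),
            ~ full a phi (rcons b x) &
            forall y, y < x -> full a phi (rcons b y)] &
      size b = (size a).-1 -> empty a phi (rcons b x)].

Definition chosen_path a phi (b p : seq nat) :=
  forall n, size b <= n < size p -> chosen_child a phi (take n p) (nth 0 p n).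

Lemma least_empty_nonempty {a phi b m y} :
  least_empty a phi b m -> y < m -> nonempty a phi (rcons b y).
Proof. by move=> [_ hlt] /hlt; apply: NNPP. Qed.

Lemma least_not_full_le {a phi b m m'} : all (fun x => 0 < x) a -> 0 < m ->
  least_empty a phi b m -> least_not_full a phi b m' -> m' <= m.
Proof.
move=> hpos hm0 hm [hm'nf hm'lt]; rewrite leqNgt; apply/negP => hmm'.
have hb : is_prefixA a b.
  apply: nonempty_is_prefixA (nonempty_prefix (prefix_rcons b 0) _).
  exact: least_empty_nonempty hm hm0.
have hfm : full a phi (rcons b m) by apply: NNPP; apply: hm'lt.
have hout := empty_full_out_of_range hpos hb hm.1 hfm.
by apply/hm'nf/out_of_range_full; apply: leq_trans hout (ltnW hmm').
Qed.

Lemma chosen_child_leaf {a phi b m} :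
  size b = (size a).-1 -> least_empty a phi b m -> chosen_child a phi b m.
Proof.
move=> hsz hm; split=> [y|hlt|_]; [exact: least_empty_nonempty hm | | exact: hm.1].
by rewrite hsz ltnn in hlt.
Qed.

Lemma chosen_child_inner {a phi b m m'} : 0 < size a -> all (fun x => 0 < x) a ->
  size b < (size a).-1 -> least_empty a phi b m -> next_choice a phi b m m' ->
  chosen_child a phi b m'.
Proof.
move=> ha hpos hsz hm [[hml ->]|[hml hm']].
  split=> [y|_|hsz']; [exact: least_empty_nonempty hm | by left; split=> //; exact: hm.1 | lia].
have hle := least_not_full_le hpos (leq_trans (last_pos ha hpos) hml) hm hm'.
split=> [y hy|_|hsz']; last lia.
  exact: (least_empty_nonempty hm) (leq_trans hy hle).
right; split=> [y hy||y /hm'.2/NNPP //]; last exact: hm'.1.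
exact: (least_empty_nonempty hm) (leq_trans hy hml).
Qed.

Lemma next_choice_not_full {a phi b m m'} :
  all (fun x => 0 < x) a -> all (fun x => last 0 a <= x) a -> size b < size a ->
  ~ full a phi b -> least_empty a phi b m -> next_choice a phi b m m' ->
  ~ full a phi (rcons b m').
Proof.
move=> hpos hle hsz hnf hm [[hml ->]|[_ hm']]; last exact: hm'.1.
have [al [hA hp _]] := not_full_witness hnf.
apply: empty_not_full hm.1; apply: is_prefixA_rcons hpos _ _; first by exists al.
exact: leq_trans hml (last_le hle hsz).
Qed.

Lemma leaf_inA {a phi b m} : 0 < size a -> all (fun x => 0 < x) a ->
  size b = (size a).-1 -> ~ full a phi b -> least_empty a phi b m -> inA a (rcons b m).
Proof.
move=> ha hpos hsz hnf hm; have [al [hA hp hal]] := not_full_witness hnf.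
have [hsal _] := (inAP a al).1 hA.
have hbal : size b < size al by rewrite hsal hsz prednK.
have hx := prefix_rcons_nth_lt hp hbal; set x := nth 0 al (size b) in hx.
have hxal : rcons b x = al.
  by apply: (prefix_size_eq hx); rewrite size_rcons hsal hsz prednK.
have hmx : m <= x.
  rewrite leqNgt; apply/negP => /(least_empty_nonempty hm) [al' [hA' hp' hal']].
  have [hsal' _] := (inAP a al').1 hA'.
  have hal'al : al = al' by apply: prefix_size_eq; [rewrite -hxal | rewrite hsal' hsal].
  by move: hal; rewrite hal'al hal'.
apply: is_prefixA_inA; last by rewrite size_rcons hsz prednK.
apply: is_prefixA_rcons hpos _ _; first by exists al.
exact: leq_ltn_trans hmx (inA_prefix_rcons hA hx).
Qed.

Lemma Next_spec {a b phi phi'} : 0 < size a -> all (fun x => 0 < x) a ->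
  all (fun x => last 0 a <= x) a -> Next a b phi phi' ->
  exists p, [/\ phi' = Defs.set1 phi p, prefix b p, size p = size a,
                ~ full a phi b -> inA a p & chosen_path a phi b p].
Proof.
move=> ha hpos hle; elim=> {b phi phi'} [b phi m hsz hm |
  b phi m m' phi' hsz hm hchoice _ [p [-> hbp hsp hpA hpath]]].
  exists (rcons b m); split=> //; first exact: prefix_rcons.
  - by rewrite size_rcons hsz prednK.
  - by move=> hnf; apply: leaf_inA ha hpos hsz hnf hm.
  move=> n; rewrite size_rcons => /andP [hbn hnb]; have -> : n = size b by lia.
  by rewrite -cats1 take_size_cat // nth_cat ltnn subnn; apply: chosen_child_leaf.
exists p; split=> //; first exact: prefix_trans (prefix_rcons b m') hbp.
  by move=> hnf; apply/hpA/(next_choice_not_full hpos hle _ hnf hm hchoice); lia.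
move=> n /andP [hbn hnp]; case: (ltngtP (size b) n) => hbn'; first 2 last.
- rewrite -hbn' (prefix_rcons_nth hbp).
  rewrite (prefix_take_size (prefix_trans (prefix_rcons b m') hbp)).
  exact: chosen_child_inner ha hpos hsz hm hchoice.
- by apply: hpath; rewrite size_rcons hbn'.
- lia.
Qed.

Lemma chosen_path_prefix {a phi p t x} :
  chosen_path a phi [::] p -> prefix (rcons t x) p -> chosen_child a phi t x.
Proof.
move=> hpath htp; have := size_prefix htp; rewrite size_rcons => hts.
rewrite -{1}(prefix_take_size (prefix_trans (prefix_rcons t x) htp)).
by rewrite -(prefix_rcons_nth htp); apply: hpath.
Qed.

Definition children_initial a phi :=
  forall (b : seq nat) i, nonempty a phi (rcons b i.+1) -> nonempty a phi (rcons b i).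

(* Next only goes past the first child of a prefix below [r z] after [r z] stopped being
   the least empty child of [r]; it then chose [z] as the least non-full child. *)
Definition left_siblings_full a phi :=
  forall (r : seq nat) z t, prefix (rcons r z) t -> nonempty a phi (rcons t 1) ->
    (forall y, y < z -> full a phi (rcons r y)) /\
    (forall y, y < last 0 a -> nonempty a phi (rcons r y)).

Lemma nonempty_set1 {a phi p s} :
  nonempty a (Defs.set1 phi p) s -> nonempty a phi s \/ prefix s p.
Proof.
move=> [al [hA hp]]; rewrite /Defs.set1 => /orP [/eqP hal|hal].
  by right; rewrite -hal.
by left; exists al.
Qed.

Lemma nonempty_set1_mono {a phi p s} : nonempty a phi s -> nonempty a (Defs.set1 phi p) s.
Proof. by move=> [al [hA hp hal]]; exists al; split=> //; rewrite /Defs.set1 hal orbT. Qed.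

Lemma full_set1_mono {a phi p s} : full a phi s -> full a (Defs.set1 phi p) s.
Proof. by move=> hf al hA hp; rewrite /Defs.set1 (hf al hA hp) orbT. Qed.

Lemma children_initial_set1 {a phi p} : chosen_path a phi [::] p ->
  children_initial a phi -> children_initial a (Defs.set1 phi p).
Proof.
move=> hpath hinit b i /nonempty_set1 [/hinit|hbp]; first exact: nonempty_set1_mono.
have [hlt _ _] := chosen_path_prefix hpath hbp.
exact/nonempty_set1_mono/hlt.
Qed.

Lemma left_siblings_full_set1 {a phi p} : chosen_path a phi [::] p -> size p = size a ->
  left_siblings_full a phi -> left_siblings_full a (Defs.set1 phi p).
Proof.
move=> hpath hsp hsib r z t hrt /nonempty_set1 [/(hsib r z t hrt) [hfull hne]|htp].
  by split=> y /[dup] hy; [move/hfull/full_set1_mono | move/hne/nonempty_set1_mono].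
have hrzp : prefix (rcons r z) p := prefix_trans hrt (prefix_trans (prefix_rcons t 1) htp).
have [ht0 _ _] := chosen_path_prefix hpath htp.
have hrz : nonempty a phi (rcons r z).
  exact: nonempty_prefix (prefix_trans hrt (prefix_rcons t 0)) (ht0 0 isT).
have hinner : size r < (size a).-1.
  have hrt' : size (rcons r z) <= size t := size_prefix hrt.
  have htp' : size (rcons t 1) <= size p := size_prefix htp.
  by move: hrt' htp'; rewrite !size_rcons hsp; lia.
have [_ /(_ hinner) [[hemp _] | [hne _ hfull]] _] := chosen_path_prefix hpath hrzp.
  by [].
by split=> y /[dup] hy; [move/hfull/full_set1_mono | move/hne/nonempty_set1_mono].
Qed.

Lemma partial_listing_invariants {a phi} : 0 < size a -> all (fun x => 0 < x) a ->
  all (fun x => last 0 a <= x) a -> partial_listing a phi ->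
  children_initial a phi /\ left_siblings_full a phi.
Proof.
move=> ha hpos hle; elim=> [|{}phi phi' _ [hinit hsib] hN].
  by split=> [b i|r z t _] [al [_ _ hal]].
have [p [-> _ hsp _ hpath]] := Next_spec ha hpos hle hN.
split; [exact: children_initial_set1 | exact: left_siblings_full_set1].
Qed.

Lemma children_initial_le {a phi} {b : seq nat} {i j} : children_initial a phi ->
  j <= i -> nonempty a phi (rcons b i) -> nonempty a phi (rcons b j).
Proof.
move=> hinit /subnKC <-; elim: (i - j) => [|k IH]; first by rewrite addn0.
by rewrite addnS => /hinit.
Qed.

Lemma chosen_child_eq {a phi} {r : seq nat} {z x} : children_initial a phi ->
  size r < (size a).-1 ->
  (forall y, y < z -> full a phi (rcons r y)) ->
  (forall y, y < last 0 a -> nonempty a phi (rcons r y)) ->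
  nonempty a phi (rcons r z) -> ~ full a phi (rcons r z) ->
  chosen_child a phi r x -> x = z.
Proof.
move=> hinit hsz hfull hne hz hnfz [_ /(_ hsz) hchoice _].
case: (ltngtP x z) => // hxz; exfalso.
- have hx := children_initial_le hinit (ltnW hxz) hz.
  by case: hchoice => [[hemp _] | [_ hnfx _]]; [apply: hemp | apply/hnfx/hfull].
- by case: hchoice => [[hemp /hne] | [_ _ /(_ z hxz)]].
Qed.

Lemma chosen_child_succ {a phi} {b : seq nat} {d x} : children_initial a phi ->
  nonempty a phi (rcons b d) -> empty a phi (rcons b d.+1) -> d.+1 < last 0 a ->
  chosen_child a phi b x -> x = d.+1.
Proof.
move=> hinit hd hd1 hlast [hlt hinner hleaf].
case: (ltngtP x d.+1) => // hx; exfalso; last exact/hd1/hlt.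
have hnx := children_initial_le hinit (ltnSE hx) hd.
case: (ltngtP (size b) (size a).-1) => hsz.
- by case: (hinner hsz) => [[hemp _] | [hne _ _]]; [apply: hemp | apply/hd1/hne].
- by move: (is_prefixA_size (nonempty_is_prefixA hd)); rewrite size_rcons; lia.
- exact: hleaf hsz hnx.
Qed.

Lemma chosen_path_follows {a phi} {s p : seq nat} :
  children_initial a phi -> left_siblings_full a phi ->
  chosen_path a phi [::] p -> size p = size a -> size s <= (size a).-1 ->
  nonempty a phi (rcons s 1) -> ~ full a phi s -> prefix s p.
Proof.
move=> hinit hsib hpath hsp hs hs1 hnf.
suff: forall r, prefix r s -> prefix r p by apply; exact: prefix_refl.
elim/last_ind=> [|r z IH] hrs; first exact: prefix0s.
have hrp := IH (prefix_trans (prefix_rcons r z) hrs).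
have hr : size r < (size a).-1.
  have hrs' : size (rcons r z) <= size s := size_prefix hrs.
  by move: hrs'; rewrite size_rcons; lia.
have hrp' : size r < size p by rewrite hsp; lia.
have hxp := prefix_rcons_nth_lt hrp hrp'.
have [hfull hne] := hsib r z s hrs hs1.
have hz := nonempty_prefix (prefix_trans hrs (prefix_rcons s 1)) hs1.
have hnfz : ~ full a phi (rcons r z) by move/(full_prefix hrs).
by rewrite -(chosen_child_eq hinit hr hfull hne hz hnfz (chosen_path_prefix hpath hxp)).
Qed.

Lemma Next_exists {a phi} {b : seq nat} : 0 < size a -> all (fun x => 0 < x) a ->
  all (fun x => last 0 a <= x) a -> size b <= (size a).-1 -> ~ full a phi b ->
  exists phi', Next a b phi phi'.
Proof.
move=> ha hpos hle; move hn: ((size a).-1 - size b) => n.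
elim: n b hn => [|n IH] b hn hb hnf.
all: have [m hm] : exists m, least_empty a phi b m := ex_least (out_of_range_empty (leqnn _)).
  by exists (Defs.set1 phi (rcons b m)); apply: Next_leaf hm; lia.
have hsz : size b < (size a).-1 by lia.
have [m' hchoice] : exists m', next_choice a phi b m m'.
  case: (ltnP m (last 0 a)) => hml; first by exists m; left.
  have [al [hA hp hal]] := not_full_witness hnf.
  have hbal : size b < size al by have [-> _] := (inAP a al).1 hA; lia.
  have hx : ~ full a phi (rcons b (nth 0 al (size b))).
    by move=> hf; move/negP: hal; apply; apply: hf hA (prefix_rcons_nth_lt hp hbal).
  have [m' hm'] : exists m', least_not_full a phi b m' := ex_least hx.
  by exists m'; right.
have hnf' := next_choice_not_full hpos hle (leq_trans hsz (leq_pred _)) hnf hm hchoice.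
have [||phi' hN] := IH (rcons b m') _ _ hnf'; rewrite ?size_rcons; [lia | lia |].
by exists phi'; apply: Next_inner hsz hm hchoice hN.
Qed.

Theorem lemma7 (a : seq nat) (phi : seq nat -> bool) (alpha' : seq nat) (d : nat) :
  0 < size a ->                          (* k >= 2 *)
  all (fun x => 0 < x) a ->              (* a_i positive *)
  all (fun x => last 0 a <= x) a ->      (* a_2 <= a_i *)
  partial_listing a phi ->
  is_prefixA a alpha' ->
  0 < size alpha' <= (size a).-1 ->      (* 3 <= l+1 <= k *)
  0 < d -> d < last 0 a - 1 ->
  nonempty a phi (rcons alpha' d) ->
  nonempty a phi (rcons alpha' d.-1) /\
  (nonempty a phi (rcons alpha' d.+1) \/
   ((exists phi', Next a [::] phi phi') /\
    forall phi', Next a [::] phi phi' -> nonempty a phi' (rcons alpha' d.+1))).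
Proof.
move=> ha hpos hle hpl halpha /andP [_ hsize] hd0 hd1 hd.
have [hinit hsib] := partial_listing_invariants ha hpos hle hpl.
split; first by apply: hinit; rewrite prednK.
have [|hemp] := classic (nonempty a phi (rcons alpha' d.+1)); [by left | right].
have hd1a : d.+1 < last 0 a by lia.
have hnf : ~ full a phi (rcons alpha' d.+1).
  apply: (empty_not_full _ hemp); apply: is_prefixA_rcons hpos halpha _.
  by apply: leq_trans hd1a (last_le hle _); lia.
have hnf0 : ~ full a phi [::] by move/(full_prefix (prefix0s _)).
split; first by apply: (Next_exists ha hpos hle _ hnf0).
move=> phi' /(Next_spec ha hpos hle) [p [-> _ hsp /(_ hnf0) hpA hpath]].
have hfollow : prefix alpha' p.
  apply: (chosen_path_follows hinit hsib hpath hsp hsize).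
  - exact: children_initial_le hinit hd0 hd.
  - by move/(full_prefix (prefix_rcons alpha' d.+1)).
have hsp' : size alpha' < size p by rewrite hsp; lia.
have hxp := prefix_rcons_nth_lt hfollow hsp'.
have hx := chosen_child_succ hinit hd hemp hd1a (chosen_path_prefix hpath hxp).
by exists p; split=> //; [rewrite -hx | rewrite /Defs.set1 eqxx].
Qed.
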